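(* Let $d\ge1$, let $\nu:\mathbb J\to\mathbb N_+$ be monotonically increasing and $p:\mathbb J\to(0,1)$ strictly decreasing with $\sum_{j\in\mathbb J}p_j=1$. Let $(j^{(t)})_{t\ge1}$ be an efficiency-nonincreasing enumeration of $\mathbb J$ and $I_{(t)}:=\{j^{(1)},\dots,j^{(t)}\}$. Then for every $t\ge1$, $I_{(t)}$ is a solution of Problem 3 with $P=p(I_{(t)})$.
   Context: $\mathbb J:=\mathbb N^d$ with $\mathbb N=\{0,1,2,\dots\}$, partially ordered componentwise ($i\le j$ iff $i_h\le j_h$ for all $h$; $i<j$ iff $i\le j$, $i\neq j$). For $I\subseteq\mathbb J$, $\operatorname{\downarrow} I:=\{j: j\le i\text{ for some } i\in I\}$. $\nu(I):=\sum_{j\in I}\nu_j$, $p(I):=\sum_{j\in I}p_j$, efficiency $r_j:=p_j/\nu_j$. Strictly decreasing: $i<j\Rightarrow f_i>f_j$; monotonically increasing: $i<j\Rightarrow f_i\le f_j$. An efficiency-nonincreasing enumeration of $\mathbb J$ is a bijection $t\mapsto j^{(t)}$ from $\mathbb N_+$ onto $\mathbb J$ with $r_{j^{(t)}}\ge r_{j^{(t+1)}}$ for all $t$. Problem 3 (for given $P\in(0,1)$): minimize $\nu(I)$ over $I\subseteq\mathbb J$ subject to $I=\operatorname{\downarrow} I$ and $p(I)\ge P$. *)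

From Stdlib Require Import Reals List Arith.
From Stdlib Require Fin.
Import ListNotations.
Open Scope R_scope.

(* The index set J = N^d, as functions Fin.t d -> nat. *)
Definition idx (d : nat) : Type := Fin.t d -> nat.

Definition leJ {d} (i j : idx d) : Prop := forall h, (i h <= j h)%nat.
Definition ltJ {d} (i j : idx d) : Prop := leJ i j /\ i <> j.

Definition downclosed {d} (I : idx d -> Prop) : Prop :=
  forall j, I j <-> exists i, I i /\ leJ j i.

Definition sumR {d} (f : idx d -> R) (l : list (idx d)) : R :=
  fold_right (fun j acc => f j + acc) 0 l.
Definition sumN {d} (f : idx d -> nat) (l : list (idx d)) : nat :=
  fold_right (fun j acc => (f j + acc)%nat) 0%nat l.

Definition finsub {d} (I : idx d -> Prop) (l : list (idx d)) : Prop :=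
  NoDup l /\ forall j, In j l -> I j.

(* nu(I) <= M, for nu(I) in N u {oo} (sum of nonnegative terms = sup of finite partial sums) *)
Definition nu_le {d} (nu : idx d -> nat) (I : idx d -> Prop) (M : nat) : Prop :=
  forall l, finsub I l -> (sumN nu l <= M)%nat.

(* p(I) >= P, where p(I) = sup of finite partial sums of the nonnegative p *)
Definition p_ge {d} (p : idx d -> R) (I : idx d -> Prop) (P : R) : Prop :=
  forall eps, 0 < eps -> exists l, finsub I l /\ sumR p l > P - eps.

Definition sums_to_one {d} (p : idx d -> R) : Prop :=
  (forall l, NoDup l -> sumR p l <= 1) /\ p_ge p (fun _ => True) 1.

Definition eff {d} (nu : idx d -> nat) (p : idx d -> R) (j : idx d) : R :=
  p j / INR (nu j).

Definition eff_enum {d} (nu : idx d -> nat) (p : idx d -> R) (e : nat -> idx d) : Prop :=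
  (forall s t, (1 <= s)%nat -> (1 <= t)%nat -> e s = e t -> s = t) /\
  (forall j, exists t, (1 <= t)%nat /\ e t = j) /\
  (forall t, (1 <= t)%nat -> eff nu p (e t) >= eff nu p (e (S t))).

Definition prefix_list {d} (e : nat -> idx d) (t : nat) : list (idx d) := map e (seq 1 t).
Definition prefix_set {d} (e : nat -> idx d) (t : nat) : idx d -> Prop :=
  fun j => exists s, (1 <= s <= t)%nat /\ e s = j.

Definition feasible3 {d} (p : idx d -> R) (P : R) (I : idx d -> Prop) : Prop :=
  downclosed I /\ p_ge p I P.
Definition solves_problem3 {d} (nu : idx d -> nat) (p : idx d -> R) (P : R)
    (I : idx d -> Prop) : Prop :=
  feasible3 p P I /\
  forall I', feasible3 p P I' -> forall M, nu_le nu I' M -> nu_le nu I M.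

From Stdlib Require Import Reals List Lra Lia Classical.
Open Scope R_scope.

(* Proof idea (a fractional-knapsack exchange argument).
   Let L = [e 1; ...; e t] enumerate the prefix I_(t) and let r = r_(e t) > 0
   be the efficiency threshold.  The "excess" p_j - r * nu_j has the sign of
   r_j - r, so it is >= 0 on I_(t) and <= 0 off I_(t) (the enumeration is
   efficiency-nonincreasing).  Hence for every finite set l of indices the
   excess summed over l is at most the excess summed over L.  If l lies in a
   feasible I', then p(l) > p(L) - r for a suitable l, which forces
   r * nu(L) < r * (nu(l) + 1), i.e. nu(L) <= nu(l) <= nu(I').
   Feasibility of I_(t) itself: it is down-closed because i < j implies
   r_i > r_j (p strictly decreasing, nu increasing), so every predecessor of
   an enumerated index is enumerated earlier. *)

Section ListSums.
Context {d : nat}.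

Lemma sumR_app (w : idx d -> R) (l1 l2 : list (idx d)) :
  sumR w (l1 ++ l2) = sumR w l1 + sumR w l2.
Proof. induction l1 as [|a l1 IH]; simpl; [ring | rewrite IH; ring]. Qed.

Lemma sumR_nonneg (w : idx d -> R) (l : list (idx d)) :
  (forall y, In y l -> 0 <= w y) -> 0 <= sumR w l.
Proof.
  induction l as [|a l IH]; intros Hw; simpl; [lra|].
  assert (0 <= w a) by (apply Hw; now left).
  assert (0 <= sumR w l) by (apply IH; intros y Hy; apply Hw; now right).
  lra.
Qed.

Lemma sumR_sign_exchange (w : idx d -> R) :
  forall l L, NoDup l ->
  (forall y, In y L -> 0 <= w y) ->
  (forall y, In y l -> ~ In y L -> w y <= 0) ->
  sumR w l <= sumR w L.
Proof.
  induction l as [|a l IH]; intros L Hnd HL Hl; simpl.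
  - now apply sumR_nonneg.
  - inversion Hnd as [|? ? Ha_notin Hnd_l]; subst.
    destruct (classic (In a L)) as [Ha|Ha].
    +
      destruct (in_split _ _ Ha) as [L1 [L2 ->]].
      assert (Hrest : sumR w l <= sumR w (L1 ++ L2)).
      { apply IH; auto.
        - intros y Hy. apply HL, in_or_app.
          apply in_app_or in Hy. simpl. tauto.
        - intros y Hy Hy_out. apply Hl; [now right|].
          intros Hy_in. apply in_app_or in Hy_in as [H|[H|H]];
            [| subst; contradiction |]; apply Hy_out, in_or_app; auto. }
      rewrite !sumR_app in *. simpl. lra.
    + assert (w a <= 0) by (apply Hl; [now left | exact Ha]).
      assert (sumR w l <= sumR w L).
      { apply IH; auto. intros y Hy. apply Hl. now right. }
      lra.
Qed.

Lemma sumR_INR (nu : idx d -> nat) (l : list (idx d)) :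
  sumR (fun j => INR (nu j)) l = INR (sumN nu l).
Proof. induction l as [|a l IH]; simpl; [reflexivity | rewrite IH, plus_INR; ring]. Qed.

Lemma sumN_incl_le (nu : idx d -> nat) (l L : list (idx d)) :
  NoDup l -> incl l L -> (sumN nu l <= sumN nu L)%nat.
Proof.
  intros Hnd Hincl. apply INR_le. rewrite <- !sumR_INR.
  apply sumR_sign_exchange; auto.
  - intros y _. apply pos_INR.
  - intros y Hy Hy_out. exfalso. exact (Hy_out (Hincl y Hy)).
Qed.

Definition excess (nu : idx d -> nat) (p : idx d -> R) (r : R) (j : idx d) : R :=
  p j - r * INR (nu j).

Lemma sumR_excess (nu : idx d -> nat) (p : idx d -> R) (r : R) (l : list (idx d)) :
  sumR (excess nu p r) l = sumR p l - r * INR (sumN nu l).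
Proof.
  unfold excess. induction l as [|a l IH]; simpl; [ring|].
  rewrite IH, plus_INR. ring.
Qed.

Lemma excess_eff (nu : idx d -> nat) (p : idx d -> R) (r : R) (j : idx d) :
  (0 < nu j)%nat -> excess nu p r j = (eff nu p j - r) * INR (nu j).
Proof.
  intros Hnu. unfold excess, eff. field.
  apply Rgt_not_eq, lt_0_INR, Hnu.
Qed.

Lemma threshold_exchange (nu : idx d -> nat) (p : idx d -> R) (r : R)
    (l L : list (idx d)) :
  0 < r -> NoDup l ->
  (forall y, In y L -> 0 <= excess nu p r y) ->
  (forall y, ~ In y L -> excess nu p r y <= 0) ->
  sumR p l > sumR p L - r ->
  (sumN nu L <= sumN nu l)%nat.
Proof.
  intros Hr Hnd HL Hout Hmass.
  assert (Hex : sumR (excess nu p r) l <= sumR (excess nu p r) L)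
    by (apply sumR_sign_exchange; auto).
  rewrite !sumR_excess in Hex.
  assert (Hlt : INR (sumN nu L) < INR (sumN nu l) + 1) by nra.
  rewrite <- S_INR in Hlt. apply INR_lt in Hlt. lia.
Qed.

End ListSums.

Section Prefixes.
Variables (d : nat) (nu : idx d -> nat) (p : idx d -> R) (e : nat -> idx d).
Hypothesis e_inj : forall s t, (1 <= s)%nat -> (1 <= t)%nat -> e s = e t -> s = t.
Hypothesis e_surj : forall j, exists t, (1 <= t)%nat /\ e t = j.
Hypothesis e_step : forall t, (1 <= t)%nat -> eff nu p (e t) >= eff nu p (e (S t)).

Lemma eff_enum_antitone (s s' : nat) :
  (1 <= s)%nat -> (s <= s')%nat -> eff nu p (e s) >= eff nu p (e s').
Proof.
  intros Hs Hss. induction Hss as [|s' Hss IH]; [lra|].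
  specialize (e_step s' ltac:(lia)). lra.
Qed.

Lemma In_prefix_list (t : nat) (j : idx d) :
  In j (prefix_list e t) <-> prefix_set e t j.
Proof.
  unfold prefix_list, prefix_set. rewrite in_map_iff.
  split; intros [s [H1 H2]]; exists s; rewrite in_seq in *; split; auto; lia.
Qed.

Lemma prefix_list_NoDup (t : nat) : NoDup (prefix_list e t).
Proof.
  apply NoDup_map_NoDup_ForallPairs; [|apply seq_NoDup].
  intros a b Ha Hb. rewrite in_seq in Ha, Hb. apply e_inj; lia.
Qed.

Hypothesis nu_pos : forall j, (0 < nu j)%nat.

Lemma excess_prefix_nonneg (t : nat) (y : idx d) :
  prefix_set e t y -> 0 <= excess nu p (eff nu p (e t)) y.
Proof.
  intros [s [Hs <-]]. rewrite excess_eff by apply nu_pos.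
  apply Rmult_le_pos; [|apply pos_INR].
  assert (eff nu p (e s) >= eff nu p (e t)) by (apply eff_enum_antitone; lia).
  lra.
Qed.

Lemma excess_outside_nonpos (t : nat) (y : idx d) :
  (1 <= t)%nat -> ~ prefix_set e t y -> excess nu p (eff nu p (e t)) y <= 0.
Proof.
  intros Ht Hy. destruct (e_surj y) as [s [Hs <-]].
  assert (Hts : (t < s)%nat).
  { destruct (Nat.lt_ge_cases t s) as [|Hst]; auto.
    exfalso. apply Hy. exists s. split; auto; lia. }
  rewrite excess_eff by apply nu_pos.
  assert (eff nu p (e t) >= eff nu p (e s)) by (apply eff_enum_antitone; lia).
  assert (0 < INR (nu (e s))) by apply lt_0_INR, nu_pos.
  nra.
Qed.

Hypothesis p_pos : forall j, 0 < p j.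
Hypothesis nu_mono : forall i j, ltJ i j -> (nu i <= nu j)%nat.
Hypothesis p_dec : forall i j, ltJ i j -> p i > p j.

Lemma eff_strictly_decreasing (i j : idx d) : ltJ i j -> eff nu p i > eff nu p j.
Proof.
  intros Hij. unfold eff, Rdiv.
  assert (Hp := p_dec i j Hij). assert (Hpj := p_pos j).
  assert (Hnui : 0 < INR (nu i)) by apply lt_0_INR, nu_pos.
  assert (Hinv : / INR (nu j) <= / INR (nu i))
    by (apply Rinv_le_contravar, le_INR, nu_mono; auto).
  assert (0 < / INR (nu j)) by apply Rinv_0_lt_compat, lt_0_INR, nu_pos.
  nra.
Qed.

Lemma prefix_downclosed (t : nat) : downclosed (prefix_set e t).
Proof.
  intro j. split.
  - intros Hj. exists j. split; auto. intro h. lia.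
  - intros [i [[s [Hs <-]] Hji]].
    destruct (classic (j = e s)) as [->|Hne]; [exists s; auto|].
    assert (Hmore : eff nu p j > eff nu p (e s))
      by (apply eff_strictly_decreasing; split; auto).
    destruct (e_surj j) as [s' [Hs' <-]].
    exists s'. split; auto.
    destruct (Nat.le_gt_cases s' t); [lia|].
    assert (eff nu p (e s) >= eff nu p (e s')) by (apply eff_enum_antitone; lia).
    lra.
Qed.

Lemma prefix_minimal (t : nat) (I' : idx d -> Prop) (M : nat) :
  (1 <= t)%nat -> p_ge p I' (sumR p (prefix_list e t)) -> nu_le nu I' M ->
  nu_le nu (prefix_set e t) M.
Proof.
  intros Ht Hmass HM.
  set (r := eff nu p (e t)).
  assert (Hr : 0 < r).
  { unfold r, eff, Rdiv.
    apply Rmult_lt_0_compat; [apply p_pos | apply Rinv_0_lt_compat, lt_0_INR, nu_pos]. }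
  destruct (Hmass r Hr) as [l [Hl_sub Hl_mass]].
  assert (HL : (sumN nu (prefix_list e t) <= sumN nu l)%nat).
  { apply (threshold_exchange nu p r); auto.
    - apply Hl_sub.
    - intros y Hy. apply excess_prefix_nonneg, In_prefix_list, Hy.
    - intros y Hy. apply excess_outside_nonpos; [exact Ht|]. now rewrite <- In_prefix_list. }
  intros l' [Hnd' Hin'].
  assert (sumN nu l' <= sumN nu (prefix_list e t))%nat.
  { apply sumN_incl_le; auto. intros y Hy. apply In_prefix_list, Hin', Hy. }
  specialize (HM l Hl_sub). lia.
Qed.

End Prefixes.

Theorem corollary1 (d : nat) (hd : (1 <= d)%nat)
  (nu : idx d -> nat) (p : idx d -> R) (e : nat -> idx d)
  (hnu_pos : forall j, (0 < nu j)%nat)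
  (hnu_mono : forall i j, ltJ i j -> (nu i <= nu j)%nat)
  (hp_range : forall j, 0 < p j < 1)
  (hp_dec : forall i j, ltJ i j -> p i > p j)
  (hp_sum : sums_to_one p)
  (he : eff_enum nu p e) :
  forall t, (1 <= t)%nat ->
    solves_problem3 nu p (sumR p (prefix_list e t)) (prefix_set e t).
Proof.
  intros t Ht.
  destruct he as [e_inj [e_surj e_step]].
  assert (p_pos : forall j, 0 < p j) by (intro j; apply hp_range).
  split; [split|].
  - now apply (prefix_downclosed d nu p e).
  -
    intros eps Heps. exists (prefix_list e t). split; [split|].
    + now apply prefix_list_NoDup.
    + intros j Hj. now apply In_prefix_list.
    + lra.
  - intros I' [_ Hmass] M HM.
    now apply (prefix_minimal d nu p e) with I'.
Qed.
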